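(* Fix $\beta\neq0$. For each of the algorithms RSVI2 and RSQ2 and any fixed $\delta\in(0,1]$, with probability at least $1-\delta/2$, $$\mathcal{R}(K)\lesssim\sum_{k=1}^K\sum_{h=1}^H\Delta_h(s_h^k,a_h^k;\tau^k_{h-1})+\frac{e^{|\beta|H}-1}{|\beta|}H\log(\log K/\delta).$$
   Context: Episodic finite-horizon tabular MDP with $|\mathcal{S}|=S$, $|\mathcal{A}|=A$, horizon $H$, $K$ episodes, transitions $\mathcal{P}_h(\cdot\mid s,a)$, deterministic rewards $r_h\in[0,1]$, fixed initial state $s_1$. For policy $\pi=(\pi_h)$ and $\beta\ne0$: $V_h^\pi(s)=\frac1\beta\log\mathbb{E}[e^{\beta\sum_{i=h}^H r_i(s_i,\pi_i(s_i))}\mid s_h=s]$, $Q_h^\pi(s,a)$ likewise with $a_h=a$; $V^*_h=\sup_\pi V^\pi_h$ attained by $\pi^*$, $Q^*_h=Q^{\pi^*}_h$. $\pi^k$ is the (greedy) policy the algorithm executes in episode $k$, $\tau^k=((s_h^k,a_h^k))_{h\in[H]}$ is the sampled trajectory of episode $k$, $\tau^k_{h-1}$ its first $h-1$ pairs. Regret $\mathcal{R}(K)=\sum_k(V_1^*-V_1^{\pi^k})(s_1)$. For $\tau_{h-1}=((s_j,a_j))_{j<h}$, $R(\tau_{h-1})=\sum_{j<h}r_j(s_j,a_j)$ (zero if $h=1$), and the cascaded gap is $\Delta_h(s,a;\tau_{h-1})=\psi_\beta e^{\beta R(\tau_{h-1})}[e^{\beta V^*_h(s)}-e^{\beta Q^*_h(s,a)}]$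 with $\psi_\beta=1/\beta$ for $\beta>0$, $e^{-\beta H}/\beta$ for $\beta<0$. $\lesssim$ hides universal constants. RSVI2 (inputs $K,\delta,\beta$): initialize $Q_h,V_h\leftarrow H-h+1$, $w_h,N_h\leftarrow0$ for $h\in[H+1]$; in episode $k$, for $h=H,\dots,1$ and $(s,a)$ with $N_h(s,a)\ge1$: $w_h(s,a)=\frac{1}{N_h(s,a)}\sum_{i<k}\mathbb{1}\{(s_h^i,a_h^i)=(s,a)\}e^{\beta[r_h(s,a)+V_{h+1}(s^i_{h+1})]}$, $b_h=c|e^{\beta(H-h+1)}-1|\sqrt{S\log(2SAHK/\delta)/N_h(s,a)}$, $G_h=\min\{e^{\beta(H-h+1)},w_h+b_h\}$ ($\beta>0$) or $\max\{e^{\beta(H-h+1)},w_h-b_h\}$ ($\beta<0$), $Q_h=\frac1\beta\log G_h$, $V_h(s)=\max_{a'}Q_h(s,a')$; then act $a_h=\arg\max_aQ_h(s_h,a)$, $h=1..H$, incrementing $N_h(s_h,a_h)$. RSQ2 (inputs $K,\delta,\beta$): initialize $Q_h,V_h\leftarrow H-h+1$ ($\beta>0$) or $0$ ($\beta<0$), $V_{H+1}\equiv0$, $N_h\leftarrow0$, $\alpha_t=\frac{H+1}{H+t}$, $G_h=e^{\beta Q_h}$; each episode for $h=1..H$: act $a_h=\arg\max Q_h(s_h,\cdot)$, observe $r_h,s_{h+1}$, $t=N_h(s_h,a_h)\leftarrow N_h(s_h,a_h)+1$, $w=(1-\alpha_t)G_h(s_h,a_h)+\alpha_te^{\beta[r_h(s_h,a_h)+V_{h+1}(s_{h+1})]}$,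 $b_{h,t}=c|e^{\beta(H-h+1)}-1|\sqrt{H\log(2SAHK/\delta)/t}$, $G_h(s_h,a_h)=\min\{e^{\beta(H-h+1)},w+\alpha_tb_{h,t}\}$ ($\beta>0$) or $\max\{e^{\beta(H-h+1)},w-\alpha_tb_{h,t}\}$ ($\beta<0$), $Q_h=\frac1\beta\log G_h$, $V_h(s_h)=\max Q_h(s_h,\cdot)$. Here $c>0$ is an appropriate universal constant. *)

From HB Require Import structures.
From mathcomp Require Import all_boot all_order all_algebra.
From mathcomp Require Import all_classical all_reals all_analysis.
Set Implicit Arguments. Unset Strict Implicit. Unset Printing Implicit Defensive.
Import Order.TTheory GRing.Theory Num.Theory.
Local Open Scope ring_scope.

(* Conventions:
   - steps are 1-based: h = 1..H; V_{H+1} = 0;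
   - a (deterministic, Markov) policy is  pi : nat -> S -> A, pi h s = action;
   - a trajectory of one episode is  tau : nat -> S * A, tau h = (s_h, a_h);
   - an algorithm maps the list of past trajectories [tau^1; ...; tau^(k-1)]
     to the greedy policy pi^k it executes in episode k. *)

Section RiskSensitiveRL.
Variables (R : realType) (S A : finType).
Variables (s1 : S) (a0 : A) (H K : nat).
Variables (P : nat -> S -> A -> S -> R) (r : nat -> S -> A -> R).
Variables (beta delta c : R).

Definition policy := nat -> S -> A.
Definition traj := nat -> (S * A)%type.
Definition Alg := seq traj -> policy.

Definition Bexp (h : nat) (s : S) (a : A) (f : S -> R) : R :=
  expR (beta * r h s a) * \sum_(s' : S) P h s a s' * f s'.

(* Wpi pi m s = E[ e^{beta sum_{i=h}^H r_i} | s_h = s ] for h = H + 1 - m *)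
Fixpoint Wpi (pi : policy) (m : nat) : S -> R :=
  match m with
  | 0 => fun _ => 1
  | m'.+1 => fun s => let h := (H - m')%N in Bexp h s (pi h s) (Wpi pi m')
  end.

Definition Vpi (pi : policy) (h : nat) (s : S) : R :=
  beta^-1 * ln (Wpi pi (H.+1 - h) s).

Definition Qpi (pi : policy) (h : nat) (s : S) (a : A) : R :=
  beta^-1 * ln (Bexp h s a (Wpi pi (H - h))).

Definition Vstar (h : nat) (s : S) : R :=
  sup [set x | exists pi : policy, x = Vpi pi h s].

(* Q*_h = Q^{pi*}_h, unfolded using V^{pi*}_{h+1} = V*_{h+1} *)
Definition Qstar (h : nat) (s : S) (a : A) : R :=
  beta^-1 * ln (Bexp h s a (fun s' => expR (beta * Vstar h.+1 s'))).

Definition psi_beta : R :=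
  if 0 < beta then beta^-1 else expR (- beta * H%:R) / beta.

Definition cumrew (tau : traj) (h : nat) : R :=
  \sum_(1 <= j < h) r j (tau j).1 (tau j).2.

(* cascaded gap Delta_h(s,a;tau_{h-1}), with Rprev = R(tau_{h-1}) *)
Definition cgap (h : nat) (s : S) (a : A) (Rprev : R) : R :=
  psi_beta * expR (beta * Rprev) *
    (expR (beta * Vstar h s) - expR (beta * Qstar h s a)).

Definition argmaxA (f : A -> R) : A :=
  odflt a0 [pick a | f a == \big[Num.max/f a0]_(b : A) f b].

Definition greedy (Q : nat -> S -> A -> R) : policy :=
  fun h s => argmaxA (Q h s).

Definition logterm : R :=
  ln ((2 * #|S| * #|A| * H * K)%N%:R / delta).

Definition topG (h : nat) : R := expR (beta * (H.+1 - h)%N%:R).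

Definition cnt (D : seq traj) (h : nat) (s : S) (a : A) : nat :=
  count (fun tau : traj => tau h == (s, a)) D.

Definition vi_Qstep (D : seq traj) (Vn : S -> R) (h : nat) (s : S) (a : A) : R :=
  let N := cnt D h s a in
  if N == 0%N then (H.+1 - h)%N%:R else
  let w := N%:R^-1 *
      \sum_(tau <- D | tau h == (s, a)) expR (beta * (r h s a + Vn (tau h.+1).1)) in
  let b := c * `|topG h - 1| * Num.sqrt (#|S|%:R * logterm / N%:R) in
  let G := if 0 < beta then Num.min (topG h) (w + b)
           else Num.max (topG h) (w - b) in
  beta^-1 * ln G.

(* vi_V D m = V_h for h = H + 1 - m (so vi_V D 0 = V_{H+1} = 0) *)
Fixpoint vi_V (D : seq traj) (m : nat) : S -> R :=
  match m with
  | 0 => fun _ => 0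
  | m'.+1 => fun s => let h := (H - m')%N in
      \big[Num.max/vi_Qstep D (vi_V D m') h s a0]_(a : A) vi_Qstep D (vi_V D m') h s a
  end.

Definition vi_Q (D : seq traj) (h : nat) (s : S) (a : A) : R :=
  vi_Qstep D (vi_V D (H - h)) h s a.

Definition RSVI2 : Alg := fun D => greedy (vi_Q D).

Record qstate := QSt {
  qG : nat -> S -> A -> R;
  qN : nat -> S -> A -> nat;
  qV : nat -> S -> R }.

Definition Qinit (h : nat) : R := if 0 < beta then (H.+1 - h)%N%:R else 0.

Definition q_init : qstate :=
  QSt (fun h _ _ => expR (beta * Qinit h)) (fun _ _ _ => 0%N) (fun h _ => Qinit h).

Definition alpha (t : nat) : R := (H.+1)%:R / (H + t)%N%:R.

Definition q_step (tau : traj) (st : qstate) (h : nat) : qstate :=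
  let s := (tau h).1 in let a := (tau h).2 in
  let t := (qN st h s a).+1 in
  let al := alpha t in
  let w := (1 - al) * qG st h s a
           + al * expR (beta * (r h s a + qV st h.+1 (tau h.+1).1)) in
  let b := c * `|topG h - 1| * Num.sqrt (H%:R * logterm / t%:R) in
  let g := if 0 < beta then Num.min (topG h) (w + al * b)
           else Num.max (topG h) (w - al * b) in
  let G' := fun h' s' a' =>
    if [&& h' == h, s' == s & a' == a] then g else qG st h' s' a' in
  let N' := fun h' s' a' =>
    if [&& h' == h, s' == s & a' == a] then t else qN st h' s' a' in
  let V' := fun h' s' =>
    if (h' == h) && (s' == s) then
      \big[Num.max/beta^-1 * ln (G' h s a0)]_(a' : A) (beta^-1 * ln (G' h s a'))
    else qV st h' s' in
  QSt G' N' V'.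

Definition q_episode (st : qstate) (tau : traj) : qstate :=
  foldl (q_step tau) st (iota 1 H).

Definition q_state (D : seq traj) : qstate := foldl q_episode q_init D.

Definition RSQ2 : Alg :=
  fun D => greedy (fun h s a => beta^-1 * ln (qG (q_state D) h s a)).

(* outcome: the visited states s_h^k, k < K (0-based episode), h-1 < H *)
Definition Omega := {ffun 'I_K -> {ffun 'I_H -> S}}.

(* state s_h in (0-based) episode k, h 1-based *)
Definition stateAt (w : Omega) (k h : nat) : S :=
  match (insub k : option 'I_K) with
  | Some i => match (insub h.-1 : option 'I_H) with
              | Some j => w i j | None => s1 end
  | None => s1
  end.

Definition mktraj (pi : policy) (st : nat -> S) : traj :=
  fun h => (st h, pi h (st h)).

Fixpoint hist (alg : Alg) (w : Omega) (k : nat) : seq traj :=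
  match k with
  | 0 => [::]
  | k'.+1 => rcons (hist alg w k') (mktraj (alg (hist alg w k')) (stateAt w k'))
  end.

(* policy executed in (0-based) episode k, and its trajectory *)
Definition polk (alg : Alg) (w : Omega) (k : nat) : policy := alg (hist alg w k).
Definition trajk (alg : Alg) (w : Omega) (k : nat) : traj :=
  mktraj (polk alg w k) (stateAt w k).

Definition weight (alg : Alg) (w : Omega) : R :=
  \prod_(k < K)
    ((stateAt w k 1 == s1)%:R *
     \prod_(1 <= h < H)
        P h (stateAt w k h) (polk alg w k h (stateAt w k h)) (stateAt w k h.+1)).

Definition prob (alg : Alg) (E : pred Omega) : R := \sum_(w | E w) weight alg w.

Definition regret (alg : Alg) (w : Omega) : R :=
  \sum_(k < K) (Vstar 1 s1 - Vpi (polk alg w k) 1 s1).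

Definition gapsum (alg : Alg) (w : Omega) : R :=
  \sum_(k < K) \sum_(1 <= h < H.+1)
     cgap h (trajk alg w k h).1 (trajk alg w k h).2 (cumrew (trajk alg w k) h).

Definition bound_whp (alg : Alg) (C : R) : Prop :=
  prob alg [pred w | regret alg w <=
     C * (gapsum alg w
          + (expR (`|beta| * H%:R) - 1) / `|beta| * H%:R * ln (ln K%:R / delta))]
  >= 1 - delta / 2.

End RiskSensitiveRL.

(* For a fixed policy [pi], a performance-difference argument makes the
   expected sum over [h] of the cascaded gaps along a trajectory of [pi]
   telescope to [psi_beta * (e^(beta V*_1) - e^(beta V^pi_1))(s1)], which by
   convexity of [expR] dominates [V*_1(s1) - V^pi_1(s1)].  The gap sum [Y_k] of
   episode [k] lies in [[0, B]] with [B = H (e^(|beta| H) - 1) / |beta|]; for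
   [Z_k = Y_k / B] with conditional mean [mu_k] given the past, the bound
   [e^(-z) <= 1 - z / 2] on [[0, 1]] gives
   [E[e^(mu_k / 2 - Z_k) | past] <= e^(mu_k / 2) (1 - mu_k / 2) <= 1], so
   [exp (sum_k (mu_k / 2 - Z_k))] has expectation at most [1].  Markov's
   inequality then yields, with probability at least [1 - delta / 2],
   [sum_k mu_k <= 2 sum_k Z_k + 2 ln (2 / delta)], and for [K >= 3] the term
   [ln (2 / delta)] is [O (ln (ln K / delta))]. *)

From HB Require Import structures.
From mathcomp Require Import all_boot all_order all_algebra.
From mathcomp Require Import all_classical all_reals all_analysis.
From mathcomp Require Import ring lra.
Set Implicit Arguments. Unset Strict Implicit. Unset Printing Implicit Defensive.
Import Order.TTheory GRing.Theory Num.Theory.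
Local Open Scope ring_scope.

Section Inequalities.
Variable R : realType.

Lemma expR_ge1 (x : R) : 0 <= x -> 1 <= expR x.
Proof. by move=> x0; rewrite -[X in X <= _]expR0 ler_expR. Qed.

Lemma expR1_lt3 : expR (1 : R) < 3.
Proof.
have e6_le : expR (1 / 6 : R) <= 6 / 5.
  have e6_gt0 : (0 : R) < expR (1 / 6) := expR_gt0 _.
  have := expR_ge1Dx (- (1 / 6) : R); rewrite expRN => /(ler_wpM2r (ltW e6_gt0)).
  by rewrite mulVf ?gt_eqF //; lra.
have -> : (1 : R) = 6%:R * (1 / 6) by rewrite mul1r mulfV.
rewrite expRM_natl; apply: (le_lt_trans (y := (6 / 5 : R) ^+ 6)).
  by rewrite lerXn2r // ?nnegrE ?expR_ge0 //.
by rewrite !exprS expr0; lra.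
Qed.

Lemma ln3_gt1 : 1 < ln (3 : R).
Proof. by rewrite -[X in X < _](expRK 1) ltr_ln ?posrE ?expR_gt0 // expR1_lt3. Qed.

(* From [expR (- z) <= 1 - z / 2] on [[0, 1]] and [expR a * (1 - a) <= 1]. *)
Lemma sum_expR_half_mean_le1 (I : finType) (p z : I -> R) :
  (forall i, 0 <= p i) -> \sum_i p i = 1 -> (forall i, 0 <= z i <= 1) ->
  \sum_i p i * expR ((\sum_j p j * z j) / 2 - z i) <= 1.
Proof.
move=> p_ge0 p_sum1 z01; set m := \sum_j p j * z j.
have expNz i : expR (- z i) <= 1 - z i / 2.
  have /andP[z0 z1] := z01 i; have ez := expR_ge1Dx (z i).
  by rewrite expRN -[_^-1]mul1r ler_pdivrMr ?expR_gt0 //; nra.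
have expm : expR (m / 2) * (1 - m / 2) <= 1.
  have := ler_wpM2l (expR_ge0 (m / 2)) (expR_ge1Dx (- (m / 2))).
  by rewrite -expRD subrr expR0.
apply: le_trans expm; under eq_bigr => i _ do rewrite expRD mulrCA.
rewrite -mulr_sumr ler_wpM2l ?expR_ge0 //.
have -> : 1 - m / 2 = \sum_i p i * (1 - z i / 2).
  by rewrite /m mulr_suml -p_sum1 -sumrB; apply: eq_bigr => i _; rewrite p_sum1; ring.
by apply: ler_sum => i _; rewrite ler_wpM2l.
Qed.

Lemma markov_expR (I : finType) (p X : I -> R) (E : pred I) (t : R) :
  (forall i, 0 <= p i) -> \sum_i p i = 1 -> \sum_i p i * expR (X i) <= 1 ->
  0 < t -> (forall i, ~~ E i -> t < expR (X i)) -> 1 - t^-1 <= \sum_(i | E i) p i.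
Proof.
move=> p_ge0 p_sum1 pX_le1 t_gt0 XE.
have tail_le : \sum_(i | ~~ E i) p i <= t^-1.
  rewrite -(ler_pM2l t_gt0) mulfV ?gt_eqF //; apply: le_trans pX_le1.
  rewrite mulr_sumr [leRHS](bigID E) /= -[leLHS]add0r.
  apply: lerD; first by apply: sumr_ge0 => i _; rewrite mulr_ge0 ?expR_ge0.
  by apply: ler_sum => i /XE Xi; rewrite mulrC ler_wpM2l // ltW.
by move: p_sum1; rewrite (bigID E) /=; lra.
Qed.

Lemma mulr_ratio (y B : R) : 0 <= y <= B -> B * (y / B) = y.
Proof.
move=> /andP[y0 yB]; have [B0|B_neq0] := eqVneq B 0; last by rewrite mulrC mulfVK.
by rewrite B0 mul0r; apply/le_anti; rewrite y0 -B0 yB.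
Qed.

Lemma ratio_in01 (y B : R) : 0 <= y <= B -> 0 <= y / B <= 1.
Proof.
move=> /andP[y0 yB]; have [B0|B_neq0] := eqVneq B 0.
  by rewrite B0 invr0 mulr0 lexx ler01.
have B_gt0 : 0 < B by rewrite lt_neqAle eq_sym B_neq0 (le_trans y0 yB).
by rewrite divr_ge0 ?(ltW B_gt0) //= ler_pdivrMr // mul1r.
Qed.

Definition log_factor : R := 2 * (1 + ln 2 / ln (ln 3)).

Lemma ln_ln3_gt0 : 0 < ln (ln (3 : R)).
Proof. by rewrite ln_gt0 // ln3_gt1. Qed.

Lemma log_factor_ge2 : 2 <= log_factor.
Proof.
have : 0 <= ln 2 / ln (ln (3 : R)).
  by apply: divr_ge0; [apply: ln_ge0; lra | exact: ltW ln_ln3_gt0].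
by rewrite /log_factor; lra.
Qed.

(* [ln 2] is absorbed by [ln (ln K)], which is at least [ln (ln 3) > 0]. *)
Lemma log2_delta_le (K : nat) (delta : R) : (3 <= K)%N -> 0 < delta <= 1 ->
  2 * ln (2 / delta) <= log_factor * ln (ln K%:R / delta).
Proof.
move=> K3 /andP[d0 d1].
have l3 := ln3_gt1; have ll3 := ln_ln3_gt0.
have K3r : (3 : R) <= K%:R by rewrite (ler_nat R 3 K).
have lK : ln (3 : R) <= ln K%:R by rewrite ler_ln ?posrE //; lra.
have llK : ln (ln (3 : R)) <= ln (ln K%:R) by rewrite ler_ln ?posrE //; lra.
have ld : ln delta <= 0 by rewrite ln_le0.
have l2 : 0 < ln (2 : R) by rewrite ln_gt0 //; lra.
rewrite !ln_div ?posrE ?ln_gt0 //; try lra.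
set q := ln 2 / ln (ln (3 : R)).
have q_ge0 : 0 <= q by rewrite divr_ge0 ?ltW.
have l2q : ln 2 <= q * ln (ln K%:R).
  by rewrite -[leLHS](mulfVK (lt0r_neq0 ll3)) -/q ler_wpM2l.
have : 0 <= q * - ln delta by rewrite mulr_ge0 // oppr_ge0.
rewrite /log_factor -/q; nra.
Qed.

End Inequalities.

Section ExponentialUtility.
Variables (R : realType) (beta : R).
Hypothesis beta_neq0 : beta != 0.

Lemma invb_ln_expR x : beta^-1 * ln (expR (beta * x)) = x.
Proof. by rewrite expRK mulrA mulVf // mul1r. Qed.

Lemma expR_invb_ln u : 0 < u -> expR (beta * (beta^-1 * ln u)) = u.
Proof. by move=> u0; rewrite mulrA mulfV // mul1r lnK. Qed.

Lemma beta_lt0 : ~~ (0 < beta) -> beta < 0.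
Proof. by rewrite -leNgt lt_neqAle beta_neq0. Qed.

(* Both [u |-> beta^-1 * ln u] and [x |-> expR (beta * x)] are monotone once
   the order is flipped by the sign of [beta]. *)
Definition sgb : R := if 0 < beta then 1 else -1.

Lemma sgb_expR_le x y : x <= y -> sgb * expR (beta * x) <= sgb * expR (beta * y).
Proof.
rewrite /sgb; case: ifP => [bp|/negbT/beta_lt0 bn] xy.
  by rewrite !mul1r ler_expR ler_pM2l.
by rewrite !mulN1r lerN2 ler_expR ler_nM2l.
Qed.

Lemma invb_ln_le u v : 0 < u -> 0 < v -> sgb * u <= sgb * v ->
  beta^-1 * ln u <= beta^-1 * ln v.
Proof.
rewrite /sgb; case: ifP => [bp|/negbT/beta_lt0 bn] u0 v0.
  by rewrite !mul1r => uv; rewrite ler_pM2l ?invr_gt0 // ler_ln.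
by rewrite !mulN1r lerN2 => vu; rewrite ler_nM2l ?invr_lt0 // ler_ln.
Qed.

Definition gap_ub (H : nat) : R := (expR (`|beta| * H%:R) - 1) / `|beta|.

Lemma gap_ub_ge0 H : 0 <= gap_ub H.
Proof. by rewrite divr_ge0 // subr_ge0 expR_ge1 // mulr_ge0. Qed.

Lemma psi_gap_ge0 H x y : y <= x ->
  0 <= psi_beta H beta * (expR (beta * x) - expR (beta * y)).
Proof.
rewrite /psi_beta; case: ifP => [bp|/negbT/beta_lt0 bn] yx.
  apply: mulr_ge0; first by rewrite invr_ge0 ltW.
  by rewrite subr_ge0 ler_expR ler_pM2l.
apply: mulr_le0; first by rewrite pmulr_rle0 ?expR_gt0 // invr_le0 ltW.
by rewrite subr_le0 ler_expR ler_nM2l.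
Qed.

(* Convexity of [expR], with the factor [psi_beta] absorbing the worst slope
   over [0, H]. *)
Lemma le_psi_gap (H : nat) x y : 0 <= y -> y <= x -> x <= H%:R ->
  x - y <= psi_beta H beta * (expR (beta * x) - expR (beta * y)).
Proof.
move=> y0 yx xH.
have e1 := expR_ge1Dx (beta * (x - y)).
have e2 := expR_ge1Dx (- beta * (x - y)).
rewrite /psi_beta; case: ifP => [bp|/negbT/beta_lt0 bn].
  have -> : expR (beta * x) - expR (beta * y)
           = expR (beta * y) * (expR (beta * (x - y)) - 1).
    by rewrite mulrBr mulr1 -expRD; congr (expR _ - _); ring.
  have ey : 1 <= expR (beta * y) by rewrite expR_ge1 // mulr_ge0 // ltW.
  have z0 : 0 <= expR (beta * (x - y)) - 1.
    by rewrite subr_ge0 expR_ge1 // mulr_ge0 ?subr_ge0 // ltW.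
  rewrite ler_pdivlMl //; apply: le_trans (ler_wpM2r z0 ey).
  by rewrite mul1r; lra.
have -> : expR (- beta * H%:R) / beta * (expR (beta * x) - expR (beta * y))
   = expR (- beta * (H%:R - x)) * ((expR (- beta * (x - y)) - 1) / - beta).
  have E1 : expR (- beta * (H%:R - x)) = expR (- beta * H%:R) * expR (beta * x).
    by rewrite -expRD; congr expR; ring.
  have E2 : expR (- beta * (x - y)) = expR (beta * y) / expR (beta * x).
    by rewrite -expRN -expRD; congr expR; ring.
  by rewrite E1 E2; field; rewrite beta_neq0 gt_eqF ?expR_gt0.
have eH : 1 <= expR (- beta * (H%:R - x)) by rewrite expR_ge1 //; nra.
have q : x - y <= (expR (- beta * (x - y)) - 1) / - beta.
  by rewrite ler_pdivlMr ?oppr_gt0 //; lra.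
apply: (le_trans q); rewrite -[X in X <= _]mul1r ler_wpM2r //.
by apply: le_trans q; rewrite subr_ge0.
Qed.

Lemma psi_gap_le (H : nat) x y : 0 <= x <= H%:R -> 0 <= y <= H%:R ->
  psi_beta H beta * (expR (beta * x) - expR (beta * y)) <= gap_ub H.
Proof.
move=> /andP[x0 xH] /andP[y0 yH]; rewrite /gap_ub /psi_beta.
case: ifP => [bp|/negbT/beta_lt0 bn].
  rewrite gtr0_norm // mulrC ler_pM2r ?invr_gt0 //.
  apply: lerB; first by rewrite ler_expR ler_pM2l.
  by rewrite expR_ge1 // mulr_ge0 // ltW.
have -> : expR (- beta * H%:R) / beta * (expR (beta * x) - expR (beta * y))
   = (expR (- beta * H%:R) * (expR (beta * y) - expR (beta * x))) / - beta.
  by field.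
rewrite ltr0_norm // ler_pM2r ?invr_gt0 ?oppr_gt0 // mulrBr -!expRD.
apply: lerB; first by rewrite ler_expR; nra.
by rewrite expR_ge1 //; nra.
Qed.

End ExponentialUtility.

Section FiniteProducts.
Variables (R : realType) (T : finType) (d : T).

Definition ext n (x : {ffun 'I_n -> T}) : nat -> T :=
  fun k => if (insub k : option 'I_n) is Some i then x i else d.

Lemma ext_ord n (x : {ffun 'I_n -> T}) (i : 'I_n) : ext x i = x i.
Proof. by rewrite /ext; case: insubP => [j _ /val_inj -> //|]; rewrite ltn_ord. Qed.

Definition upd (g : nat -> T) (n : nat) (y : T) : nat -> T :=
  fun k => if k == n then y else g k.

Definition rcons_ffun n (x : {ffun 'I_n -> T}) (y : T) : {ffun 'I_n.+1 -> T} :=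
  [ffun i : 'I_n.+1 => if (insub (val i) : option 'I_n) is Some j then x j else y].

Lemma ext_rcons_ffun n x y : ext (@rcons_ffun n x y) = upd (ext x) n y.
Proof.
apply: funext => k; rewrite /ext /upd.
case: insubP => [i ki ik|]; last first.
  rewrite -leqNgt => nk; rewrite gtn_eqF //.
  by case: insubP => // j; rewrite ltnNge (ltnW nk).
rewrite ffunE ik; case: insubP => [j kj _|]; first by rewrite ltn_eqF.
by rewrite -leqNgt => nk; rewrite eqn_leq nk -ltnS ki.
Qed.

Lemma sum_ffunS n (F : {ffun 'I_n.+1 -> T} -> R) :
  \sum_(w : {ffun 'I_n.+1 -> T}) F w =
  \sum_(x : {ffun 'I_n -> T}) \sum_(y : T) F (rcons_ffun x y).
Proof.
rewrite pair_big /= (reindex (fun p : {ffun 'I_n -> T} * T => rcons_ffun p.1 p.2)) //=.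
pose unrcons (w : {ffun 'I_n.+1 -> T}) :=
  ([ffun j : 'I_n => w (widen_ord (leqnSn n) j)], w ord_max).
apply: onW_bij; exists unrcons.
  case=> x y; rewrite /unrcons /=; congr pair.
    apply/ffunP => j; rewrite !ffunE /=; case: insubP => [j' _ /val_inj -> //|].
    by rewrite ltn_ord.
  by rewrite ffunE; case: insubP => // j; rewrite /= ltnn.
move=> w; apply/ffunP => i; rewrite /unrcons !ffunE /=.
case: insubP => [j _ ji|]; first by rewrite ffunE; congr (w _); exact: val_inj.
rewrite -leqNgt => ni; congr (w _); apply: val_inj => /=.
by apply/eqP; rewrite eqn_leq ni -ltnS ltn_ord.
Qed.

Definition prefix_dep (k : nat) (f : (nat -> T) -> R) : Prop :=
  forall g g', (forall j, (j < k)%N -> g j = g' j) -> f g = f g'.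

Lemma prefix_dep_upd k n f g y : (k <= n)%N -> prefix_dep k f -> f (upd g n y) = f g.
Proof.
by move=> kn fk; apply: fk => j jk; rewrite /upd ltn_eqF // (leq_trans jk kn).
Qed.

Lemma prefix_dep_le k n f : (k <= n)%N -> prefix_dep k f -> prefix_dep n f.
Proof. by move=> kn fk g g' E; apply: fk => j jk; apply: E; exact: leq_trans kn. Qed.

Lemma sum_prod_peel n (F : nat -> (nat -> T) -> R) (G : (nat -> T) -> R) :
  (forall k, prefix_dep k.+1 (F k)) ->
  \sum_(x : {ffun 'I_n.+1 -> T}) (\prod_(k < n.+1) F k (ext x)) * G (ext x) =
  \sum_(x : {ffun 'I_n -> T}) (\prod_(k < n) F k (ext x)) *
     \sum_(y : T) F n (upd (ext x) n y) * G (upd (ext x) n y).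
Proof.
move=> Fdep; rewrite sum_ffunS; apply: eq_bigr => x _; rewrite mulr_sumr.
apply: eq_bigr => y _; rewrite ext_rcons_ffun big_ord_recr /= -mulrA; congr (_ * _).
by apply: eq_bigr => k _; apply: prefix_dep_upd (Fdep k).
Qed.

Lemma sum_ffun0 (f : (nat -> T) -> R) :
  \sum_(x : {ffun 'I_0 -> T}) f (ext x) = f (fun _ => d).
Proof.
rewrite (eq_bigr (fun _ => f (fun _ => d))) ?sumr_const ?card_ffun ?card_ord //.
move=> x _; congr f; apply: funext => k; rewrite /ext.
by case: insubP => // -[].
Qed.

Lemma sum_prod_le1 (F : nat -> (nat -> T) -> R) :
  (forall k, prefix_dep k.+1 (F k)) -> (forall k g, 0 <= F k g) ->
  (forall k g, \sum_(y : T) F k (upd g k y) <= 1) ->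
  forall n, \sum_(x : {ffun 'I_n -> T}) \prod_(k < n) F k (ext x) <= 1.
Proof.
move=> Fdep F_ge0 F_sum; elim=> [|n IH].
  by rewrite (sum_ffun0 (fun g => \prod_(k < 0) F k g)) big_ord0.
have := sum_prod_peel n (fun=> 1) Fdep; rewrite (eq_bigr _ (fun _ _ => mulr1 _)) => ->.
apply: le_trans IH; apply: ler_sum => x _.
by rewrite -[leRHS]mulr1 ler_wpM2l ?prodr_ge0 // (eq_bigr _ (fun y _ => mulr1 _)).
Qed.

Lemma sum_prod_eq1 (F : nat -> (nat -> T) -> R) :
  (forall k, prefix_dep k.+1 (F k)) ->
  (forall k g, \sum_(y : T) F k (upd g k y) = 1) ->
  forall n, \sum_(x : {ffun 'I_n -> T}) \prod_(k < n) F k (ext x) = 1.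
Proof.
move=> Fdep F_sum; elim=> [|n IH].
  by rewrite (sum_ffun0 (fun g => \prod_(k < 0) F k g)) big_ord0.
have := sum_prod_peel n (fun=> 1) Fdep; rewrite (eq_bigr _ (fun _ _ => mulr1 _)) => ->.
by rewrite -[RHS]IH; apply: eq_bigr => x _; rewrite (eq_bigr _ (fun y _ => mulr1 _)) F_sum mulr1.
Qed.

End FiniteProducts.

Section RiskSensitiveMDP.
Variables (R : realType) (S A : finType) (s1 : S) (a0 : A) (H : nat).
Variables (P : nat -> S -> A -> S -> R) (r : nat -> S -> A -> R) (beta : R).
Hypothesis P_ge0 : forall h s a s', (1 <= h <= H)%N -> 0 <= P h s a s'.
Hypothesis P_sum1 : forall h s a, (1 <= h <= H)%N -> \sum_(s' : S) P h s a s' = 1.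
Hypothesis r_in01 : forall h s a, (1 <= h <= H)%N -> 0 <= r h s a <= 1.
Hypothesis beta_neq0 : beta != 0.

Definition expE h s a (f : S -> R) : R := \sum_(s' : S) P h s a s' * expR (beta * f s').

Definition ce h s a (f : S -> R) : R := beta^-1 * ln (expE h s a f).

Lemma expE_gt0 h s a f : (1 <= h <= H)%N -> 0 < expE h s a f.
Proof.
move=> hH; have Pf_ge0 s' : 0 <= P h s a s' * expR (beta * f s').
  by rewrite mulr_ge0 ?P_ge0 ?expR_ge0.
rewrite lt_neqAle sumr_ge0 // andbT eq_sym psumr_eq0 //.
apply/negP => /allP P0.
suff : \sum_(s' : S) P h s a s' = 0 by rewrite P_sum1 // => /eqP; rewrite oner_eq0.
apply: big1 => s' _; have /= := P0 s' (mem_index_enum _).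
by rewrite mulf_eq0 (gt_eqF (expR_gt0 _)) orbF => /eqP.
Qed.

Lemma Bexp_expR h s a f : (1 <= h <= H)%N ->
  Bexp P r beta h s a (fun s' => expR (beta * f s')) = expR (beta * (r h s a + ce h s a f)).
Proof.
by move=> hH; rewrite /Bexp mulrDr expRD expR_invb_ln ?expE_gt0.
Qed.

Lemma ce_le h s a f g : (1 <= h <= H)%N -> (forall s', f s' <= g s') ->
  ce h s a f <= ce h s a g.
Proof.
move=> hH fg; apply: invb_ln_le; rewrite ?expE_gt0 // !mulr_sumr.
apply: ler_sum => s' _; rewrite !(mulrCA (sgb beta)) ler_wpM2l ?P_ge0 //.
exact: sgb_expR_le.
Qed.

Lemma ce_cst h s a x : (1 <= h <= H)%N -> ce h s a (fun _ => x) = x.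
Proof. by move=> hH; rewrite /ce /expE -mulr_suml P_sum1 // mul1r invb_ln_expR. Qed.

Lemma ce_step_bnd h s a (f : S -> R) (m : nat) : (1 <= h <= H)%N ->
  (forall s', 0 <= f s' <= m%:R) -> 0 <= r h s a + ce h s a f <= m.+1%:R.
Proof.
move=> hH f_bnd.
have lo : 0 <= ce h s a f.
  by rewrite -(@ce_cst h s a 0) //; apply: ce_le => // s'; case/andP: (f_bnd s').
have hi : ce h s a f <= m%:R.
  by rewrite -[leRHS](@ce_cst h s a) //; apply: ce_le => // s'; case/andP: (f_bnd s').
by have := r_in01 s a hH; rewrite -natr1; lra.
Qed.

Lemma stage_in_range m : (m < H)%N -> (1 <= H - m <= H)%N.
Proof. by move=> mH; rewrite subn_gt0 mH leq_subr. Qed.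

(* [vpi pi m] is the value of [pi] at step [H + 1 - m]. *)
Fixpoint vpi (pi : policy S A) (m : nat) : S -> R :=
  match m with
  | 0 => fun _ => 0
  | m'.+1 => fun s => let h := (H - m')%N in r h s (pi h s) + ce h s (pi h s) (vpi pi m')
  end.

Lemma vpi_bnd pi m s : (m <= H)%N -> 0 <= vpi pi m s <= m%:R.
Proof.
elim: m s => [|m IH] s mH /=; first by rewrite lexx.
by apply: ce_step_bnd; [exact: stage_in_range | move=> s'; apply: IH; exact: ltnW].
Qed.

Lemma Wpi_vpi pi m : (m <= H)%N -> Wpi H P r beta pi m = fun s => expR (beta * vpi pi m s).
Proof.
elim: m => [|m IH] mH /=; first by apply: funext => s; rewrite mulr0 expR0.
by apply: funext => s; rewrite IH ?(ltnW mH) // Bexp_expR // stage_in_range.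
Qed.

Lemma Vpi_vpi pi h s : (1 <= h <= H.+1)%N -> Vpi H P r beta pi h s = vpi pi (H.+1 - h) s.
Proof.
by move=> /andP[h1 _]; rewrite /Vpi Wpi_vpi ?invb_ln_expR // leq_subLR addnC -addn1 leq_add2l.
Qed.

Definition qopt (V : S -> R) h s a : R := r h s a + ce h s a V.

Fixpoint vopt (m : nat) : S -> R :=
  match m with
  | 0 => fun _ => 0
  | m'.+1 => fun s => let h := (H - m')%N in
      qopt (vopt m') h s [arg max_(a > a0) qopt (vopt m') h s a]%O
  end.

Definition pistar : policy S A :=
  fun h s => [arg max_(a > a0) qopt (vopt (H - h)) h s a]%O.

Lemma qopt_le_vopt m s a : qopt (vopt m) (H - m) s a <= vopt m.+1 s.
Proof. by rewrite /=; case: arg_maxP => // b _; exact. Qed.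

Lemma vopt_bnd m s : (m <= H)%N -> 0 <= vopt m s <= m%:R.
Proof.
elim: m s => [|m IH] s mH /=; first by rewrite lexx.
by apply: ce_step_bnd; [exact: stage_in_range | move=> s'; apply: IH; exact: ltnW].
Qed.

Lemma vpi_le_vopt pi m s : (m <= H)%N -> vpi pi m s <= vopt m s.
Proof.
elim: m s => [|m IH] s mH //=.
apply: le_trans (qopt_le_vopt m s (pi (H - m)%N s)).
by rewrite /qopt lerD2l; apply: ce_le => [|s']; [exact: stage_in_range | apply: IH; exact: ltnW].
Qed.

Lemma vpi_pistar m : (m <= H)%N -> vpi pistar m = vopt m.
Proof.
elim: m => [//|m IH] mH; apply: funext => s.
rewrite [LHS]/= [RHS]/= IH; last exact: ltnW.
by rewrite /pistar subKn 1?ltnW // /qopt.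
Qed.

Lemma Vstar_vopt h s : (1 <= h <= H.+1)%N -> Vstar H P r beta h s = vopt (H.+1 - h) s.
Proof.
move=> hH; have mH : (H.+1 - h <= H)%N.
  by case/andP: hH => h1 _; rewrite leq_subLR addnC -addn1 leq_add2l.
rewrite /Vstar; apply/le_anti/andP; split.
  apply: ge_sup; first by exists (Vpi H P r beta pistar h s), pistar.
  by move=> x [pi ->]; rewrite Vpi_vpi // vpi_le_vopt.
apply: ub_le_sup.
  by exists (vopt (H.+1 - h) s) => x [pi ->]; rewrite Vpi_vpi // vpi_le_vopt.
by exists pistar; rewrite Vpi_vpi // vpi_pistar.
Qed.

Lemma Qstar_qopt h s a : (1 <= h <= H)%N -> Qstar H P r beta h s a = qopt (vopt (H - h)) h s a.
Proof.
move=> hH; rewrite /Qstar.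
have -> : (fun s' => expR (beta * Vstar H P r beta h.+1 s')) =
          (fun s' => expR (beta * vopt (H - h) s')).
  by apply: funext => s'; rewrite Vstar_vopt ?subSS //; case/andP: hH.
by rewrite Bexp_expR // invb_ln_expR.
Qed.

Lemma Qstar_le_Vstar h s a : (1 <= h <= H)%N -> Qstar H P r beta h s a <= Vstar H P r beta h s.
Proof.
move=> /andP[h1 hH]; rewrite Qstar_qopt ?h1 // Vstar_vopt ?h1 ?(leq_trans hH) //.
by rewrite subSn //; have := qopt_le_vopt (H - h) s a; rewrite subKn.
Qed.

Section PathLaw.
Variable pi : policy S A.

(* Paths are stored 0-based, [g k] being the state [s_(k+1)], and [states1 g]
   is the 1-based view used by [stateAt] and [cumrew]; [next_law 0] is the
   law of [s_1]. *)
Definition states1 (g : nat -> S) : nat -> S := fun h => g h.-1.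

Definition next_law (n : nat) (s y : S) : R :=
  if n is 0 then (y == s1)%:R else P n s (pi n s) y.

Definition path_weight (n : nat) (g : nat -> S) : R :=
  \prod_(k < n) next_law k (g k.-1) (g k).

Definition pathE (n : nat) (f : (nat -> S) -> R) : R :=
  \sum_(x : {ffun 'I_n -> S}) path_weight n (ext s1 x) * f (ext s1 x).

Lemma next_law_ge0 n s y : (n <= H)%N -> 0 <= next_law n s y.
Proof. by case: n => [|n] nH /=; [exact: ler0n | exact: P_ge0]. Qed.

Lemma next_law_sum1 n s : (n < H)%N -> \sum_(y : S) next_law n s y = 1.
Proof.
case: n => [|n] nH; last by rewrite /next_law P_sum1 // (ltnW nH).
by rewrite (bigD1 s1) //= eqxx big1 ?addr0 // => y /negbTE ->.
Qed.

Lemma path_weight_ge0 n g : (n <= H.+1)%N -> 0 <= path_weight n g.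
Proof.
move=> nH; apply: prodr_ge0 => k _; apply: next_law_ge0.
by rewrite -ltnS (leq_trans (ltn_ord k) nH).
Qed.

Lemma next_law_upd n g y : next_law n (upd g n y n.-1) y = next_law n (g n.-1) y.
Proof. by case: n => [|n] //; rewrite /upd ltn_eqF. Qed.

Lemma pathE0 f : pathE 0 f = f (fun _ => s1).
Proof.
by rewrite /pathE (sum_ffun0 _ (fun g => path_weight 0 g * f g)) /path_weight big_ord0 mul1r.
Qed.

Lemma pathE_succ n f :
  pathE n.+1 f = pathE n (fun g => \sum_(y : S) next_law n (g n.-1) y * f (upd g n y)).
Proof.
rewrite /pathE /path_weight.
rewrite (@sum_prod_peel _ _ s1 n (fun k g => next_law k (g k.-1) (g k))); last first.
  by move=> k g g' E; rewrite !E // ltnS leq_pred.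
apply: eq_bigr => x _; congr (_ * _); apply: eq_bigr => y _.
by rewrite {2}/upd eqxx next_law_upd.
Qed.

Lemma pathE_marginal n f : (n < H)%N -> prefix_dep n f -> pathE n.+1 f = pathE n f.
Proof.
move=> nH fn; rewrite pathE_succ; congr pathE; apply: funext => g.
rewrite -[RHS]mul1r -(next_law_sum1 (g n.-1) nH) mulr_suml.
by apply: eq_bigr => y _; rewrite (prefix_dep_upd g y (leqnn n) fn).
Qed.

Lemma pathE_marginal_le h n f : (h <= n <= H)%N -> prefix_dep h f -> pathE n f = pathE h f.
Proof.
elim: n => [|n IH] /andP[hn nH] fh; first by move: hn; rewrite leqn0 => /eqP ->.
have [->//|hn'] := eqVneq h n.+1.
have hn2 : (h <= n)%N by rewrite -ltnS ltn_neqAle hn' hn.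
by rewrite pathE_marginal ?IH ?hn2 ?(ltnW nH) //; exact: prefix_dep_le hn2 fh.
Qed.

Lemma pathE_cst n c : (n <= H)%N -> pathE n (fun _ => c) = c.
Proof. by move=> nH; rewrite (@pathE_marginal_le 0) ?pathE0. Qed.

Definition Bpi (h : nat) (f : S -> R) : S -> R := fun s => Bexp P r beta h s (pi h s) f.

Fixpoint Bpi_comp (n : nat) (f : S -> R) : S -> R :=
  if n is n'.+1 then Bpi_comp n' (Bpi n f) else f.

Definition crew (g : nat -> S) (h : nat) : R := cumrew r (mktraj pi (states1 g)) h.

Lemma crew_prefix h : prefix_dep h.-1 (fun g => crew g h).
Proof.
move=> g g' E; apply: eq_big_nat => j /andP[j1 jh].
rewrite /mktraj /states1 /= E //.
by case: j j1 jh => // j _ jh; rewrite -ltnS (leq_trans jh) // leqSpred.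
Qed.

Lemma crewS g h : (1 <= h)%N -> crew g h.+1 = crew g h + r h (g h.-1) (pi h (g h.-1)).
Proof. by move=> h1; rewrite /crew /cumrew big_nat_recr. Qed.

Lemma pathE_stage h f : (1 <= h <= H)%N ->
  pathE h (fun g => expR (beta * crew g h) * f (g h.-1)) = Bpi_comp h.-1 f s1.
Proof.
elim: h f => [//|h IH] f /andP[_ hH]; rewrite pathE_succ.
case: h IH hH => [_ _|h IH hH].
  rewrite pathE0 /= (bigD1 s1) //= eqxx big1 => [|y /negbTE ->]; last by rewrite mul0r.
  by rewrite /upd /= /crew /cumrew big_geq // mulr0 expR0 !mul1r addr0.
rewrite [RHS]/= -(IH (Bpi h.+1 f)); last exact: ltnW hH.
congr pathE; apply: funext => g; rewrite /Bpi /Bexp.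
rewrite mulrA mulr_sumr; apply: eq_bigr => y _.
rewrite (prefix_dep_upd g y _ (@crew_prefix h.+2)) // crewS // mulrDr expRD /upd eqxx /=.
ring.
Qed.

Lemma pathE_reward h f : (1 <= h <= H)%N ->
  pathE H (fun g => expR (beta * crew g h) * f (g h.-1)) = Bpi_comp h.-1 f s1.
Proof.
move=> /andP[h1 hH]; rewrite (@pathE_marginal_le h) ?hH ?leqnn ?pathE_stage ?h1 //.
move=> g g' E; rewrite E ?prednK // (@crew_prefix h g g') // => j jh.
by apply: E; rewrite (leq_trans jh) // leq_pred.
Qed.

Lemma Bpi_comp_Wpi n : (n <= H)%N ->
  Bpi_comp n (Wpi H P r beta pi (H - n)) = Wpi H P r beta pi H.
Proof.
elim: n => [|n IH] nH; first by rewrite subn0.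
rewrite /= -(IH (ltnW nH)); congr Bpi_comp.
by apply: funext => s; rewrite -(subnSK nH) /= subKn.
Qed.

Lemma path_weight_sum1 : \sum_(x : {ffun 'I_H -> S}) path_weight H (ext s1 x) = 1.
Proof. by rewrite -[RHS](pathE_cst 1 (leqnn H)); apply: eq_bigr => x _; rewrite mulr1. Qed.

Lemma path_weight_states1 n (x : {ffun 'I_n -> S}) : let st := states1 (ext s1 x) in
  path_weight n (ext s1 x) =
  (st 1%N == s1)%:R * \prod_(1 <= h < n) P h (st h) (pi h (st h)) (st h.+1).
Proof.
case: n x => [|n] x st.
  rewrite /path_weight big_ord0 big_geq // /st /states1 /= /ext mulr1.
  by case: insubP => [[]|]; rewrite ?eqxx.
by rewrite /path_weight big_ord_recl big_add1 big_mkord.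
Qed.

Lemma pathE_ler n f1 f2 : (n <= H)%N -> (forall g, f1 g <= f2 g) -> pathE n f1 <= pathE n f2.
Proof.
move=> nH f12; apply: ler_sum => x _.
by rewrite ler_wpM2l ?path_weight_ge0 // ltnW.
Qed.

Lemma pathE_sum (I : Type) (rI : seq I) (Q : pred I) n (F : I -> (nat -> S) -> R) :
  pathE n (fun g => \sum_(i <- rI | Q i) F i g) = \sum_(i <- rI | Q i) pathE n (F i).
Proof. by rewrite /pathE; under eq_bigr do rewrite mulr_sumr; exact: exchange_big. Qed.

Lemma pathE_mulrBr n c f1 f2 :
  pathE n (fun g => c * (f1 g - f2 g)) = c * (pathE n f1 - pathE n f2).
Proof. by rewrite /pathE mulrBr !mulr_sumr -sumrB; apply: eq_bigr => x _; ring. Qed.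

End PathLaw.

Definition traj_gap (tau : traj S A) : R :=
  \sum_(1 <= h < H.+1) cgap H P r beta h (tau h).1 (tau h).2 (cumrew r tau h).

Definition Ymax : R := gap_ub beta H * H%:R.

Lemma cumrew_bnd tau h : (h <= H.+1)%N -> 0 <= cumrew r tau h <= h.-1%:R.
Proof.
move=> hH; have r01 j : (1 <= j < h)%N -> 0 <= r j (tau j).1 (tau j).2 <= 1.
  by move=> /andP[j1 jh]; apply: r_in01; rewrite j1 -ltnS (leq_trans jh hH).
apply/andP; split.
  by rewrite /cumrew big_nat_cond sumr_ge0 // => j /andP[/r01/andP[]].
rewrite -subn1 -sumr_const_nat /cumrew big_nat_cond [leRHS]big_nat_cond.
by apply: ler_sum => j /andP[/r01/andP[]].
Qed.

Lemma cgap_bnd h s a x : (1 <= h <= H)%N -> 0 <= x <= h.-1%:R ->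
  0 <= cgap H P r beta h s a x <= gap_ub beta H.
Proof.
move=> hH /andP[x0 xh]; have /andP[h1 hH'] := hH.
have -> : cgap H P r beta h s a x = psi_beta H beta *
    (expR (beta * (x + Vstar H P r beta h s)) - expR (beta * (x + Qstar H P r beta h s a))).
  by rewrite /cgap -mulrA mulrBr -!expRD !mulrDr.
have QV := Qstar_le_Vstar s a hH.
have Vb : 0 <= Vstar H P r beta h s <= (H.+1 - h)%:R.
  rewrite Vstar_vopt ?h1 ?(leq_trans hH') // vopt_bnd //.
  by rewrite leq_subLR addnC -addn1 leq_add2l.
have Qb : 0 <= Qstar H P r beta h s a <= (H.+1 - h)%:R.
  by rewrite Qstar_qopt // subSn //; apply: ce_step_bnd => // s'; rewrite vopt_bnd ?leq_subr.
have e : (h.-1%:R + (H.+1 - h)%:R = H%:R :> R).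
  by rewrite -natrD -{2}(prednK h1) subSS subnKC // (leq_trans (leq_pred h) hH').
rewrite psi_gap_ge0 ?lerD2l //=; apply: psi_gap_le => //; apply/andP; split; lra.
Qed.

Lemma traj_gap_bnd tau : 0 <= traj_gap tau <= Ymax.
Proof.
have gap_h h : (1 <= h < H.+1)%N ->
    0 <= cgap H P r beta h (tau h).1 (tau h).2 (cumrew r tau h) <= gap_ub beta H.
  by move=> /andP[h1 hH]; rewrite cgap_bnd ?h1 // cumrew_bnd // ltnW.
apply/andP; split; first by rewrite /traj_gap big_nat_cond sumr_ge0 // => h /andP[/gap_h/andP[]].
have -> : Ymax = \sum_(1 <= h < H.+1) gap_ub beta H.
  by rewrite /Ymax sumr_const_nat subn1 mulr_natr.
rewrite /traj_gap big_nat_cond [leRHS]big_nat_cond.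
by apply: ler_sum => h /andP[/gap_h/andP[]].
Qed.

Definition mean_gap (pi : policy S A) : R :=
  pathE pi H (fun g => traj_gap (mktraj pi (states1 g))).

(* Performance difference: the expected cascaded gaps telescope. *)
Lemma mean_gap_psi pi : mean_gap pi = psi_beta H beta *
  (expR (beta * Vstar H P r beta 1 s1) - expR (beta * Vpi H P r beta pi 1 s1)).
Proof.
pose W j s := expR (beta * Vstar H P r beta j s).
pose u j := Bpi_comp pi j (W j.+1) s1.
have gap_h h : (1 <= h <= H)%N ->
    pathE pi H (fun g => cgap H P r beta h (g h.-1) (pi h (g h.-1)) (crew pi g h)) =
    psi_beta H beta * (u h.-1 - u h).
  case: h => // h hH.
  transitivity (pathE pi H (fun g => psi_beta H beta *
      (expR (beta * crew pi g h.+1) * W h.+1 (g h) -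
       expR (beta * crew pi g h.+1) * Bpi pi h.+1 (W h.+2) (g h)))).
    congr pathE; apply: funext => g; rewrite /cgap /Qstar expR_invb_ln //.
      by rewrite /W /Bpi; ring.
    by rewrite Bexp_expR // expR_gt0.
  by rewrite pathE_mulrBr !pathE_reward.
have tele : \sum_(1 <= h < H.+1) (u h.-1 - u h) = u 0%N - u H.
  rewrite big_add1 /=; under eq_bigr do rewrite -opprB.
  by rewrite sumrN telescope_sumr // opprB.
have W_last : W H.+1 = Wpi H P r beta pi (H - H).
  by apply: funext => s; rewrite subnn /W Vstar_vopt ?subnn //= mulr0 expR0.
transitivity (\sum_(1 <= h < H.+1)
    pathE pi H (fun g => cgap H P r beta h (g h.-1) (pi h (g h.-1)) (crew pi g h))).
  by rewrite -pathE_sum.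
rewrite big_nat_cond (eq_bigr (fun h => psi_beta H beta * (u h.-1 - u h))); last first.
  by move=> h /andP[/andP[h1 hH] _]; rewrite gap_h // h1 -ltnS.
rewrite -big_nat_cond -mulr_sumr tele /u W_last Bpi_comp_Wpi //.
by rewrite /Vpi subSS subn0 expR_invb_ln // Wpi_vpi // expR_gt0.
Qed.

Lemma mean_gap_bnd pi : 0 <= mean_gap pi <= Ymax.
Proof.
have tg g := traj_gap_bnd (mktraj pi (states1 g)).
apply/andP; split.
  by rewrite -(pathE_cst pi 0 (leqnn H)); apply: pathE_ler => // g; case/andP: (tg g).
by rewrite -(pathE_cst pi Ymax (leqnn H)); apply: pathE_ler => // g; case/andP: (tg g).
Qed.

Lemma Vstar_sub_Vpi_le pi : Vstar H P r beta 1 s1 - Vpi H P r beta pi 1 s1 <= mean_gap pi.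
Proof.
rewrite mean_gap_psi Vstar_vopt // Vpi_vpi // subSS subn0.
have /andP[v0 _] := vpi_bnd pi s1 (leqnn H).
have /andP[_ vH] := vopt_bnd s1 (leqnn H).
by apply: le_psi_gap => //; exact: vpi_le_vopt.
Qed.

Section Episodes.
Variables (K : nat) (alg : Alg S A).

Definition path_s1 : {ffun 'I_H -> S} := [ffun=> s1].

Fixpoint history (st : nat -> nat -> S) (k : nat) : seq (traj S A) :=
  if k is k'.+1 then rcons (history st k') (mktraj (alg (history st k')) (st k')) else [::].

(* An outcome [w : Omega] is handled through [G := ext path_s1 w], the path of
   episode [k] being [G k]; [epi_policy G k] is then the policy of episode [k]
   and depends only on [G j] for [j < k]. *)
Definition epi_policy (G : nat -> {ffun 'I_H -> S}) (k : nat) : policy S A :=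
  alg (history (fun j => states1 (ext s1 (G j))) k).

Lemma history_prefix st st' k :
  (forall j, (j < k)%N -> st j = st' j) -> history st k = history st' k.
Proof. by elim: k => //= k IH E; rewrite IH ?E // => j jk; apply: E; exact: ltnW. Qed.

Lemma epi_policy_prefix G G' k :
  (forall j, (j < k)%N -> G j = G' j) -> epi_policy G k = epi_policy G' k.
Proof.
move=> E; rewrite /epi_policy (history_prefix (st' := fun j => states1 (ext s1 (G' j)))) //.
by move=> j /E ->.
Qed.

Lemma episode_prefix_dep k (f : policy S A -> {ffun 'I_H -> S} -> R) :
  prefix_dep k.+1 (fun G => f (epi_policy G k) (G k)).
Proof.
move=> G G' E; rewrite E // (epi_policy_prefix (G' := G')) // => j jk.
by rewrite E // ltnW.
Qed.

Lemma sum_episode_upd k (f : policy S A -> {ffun 'I_H -> S} -> R) G :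
  \sum_(y : {ffun 'I_H -> S}) f (epi_policy (upd G k y) k) (upd G k y k) =
  \sum_(y : {ffun 'I_H -> S}) f (epi_policy G k) y.
Proof.
apply: eq_bigr => y _; rewrite {2}/upd eqxx (epi_policy_prefix (G' := G)) // => j jk.
by rewrite /upd ltn_eqF.
Qed.

Lemma stateAt_ext (w : Omega S H K) : stateAt s1 w = fun k => states1 (ext s1 (ext path_s1 w k)).
Proof.
apply: funext => k; apply: funext => h; rewrite /stateAt /states1 /ext.
by case: (insub k) => [i|]; case: (insub h.-1) => [j|] //; rewrite ffunE.
Qed.

Lemma polk_epi_policy (w : Omega S H K) k : polk s1 alg w k = epi_policy (ext path_s1 w) k.
Proof.
rewrite /polk /epi_policy -stateAt_ext; congr alg.
by elim: k => //= k ->.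
Qed.

Lemma prod_polk (w : Omega S H K) (f : policy S A -> {ffun 'I_H -> S} -> R) :
  \prod_(k < K) f (polk s1 alg w k) (w k) =
  \prod_(k < K) (fun k G => f (epi_policy G k) (G k)) k (ext path_s1 w).
Proof. by apply: eq_bigr => k _; rewrite polk_epi_policy ext_ord. Qed.

Definition episode_weight (pi : policy S A) (x : {ffun 'I_H -> S}) : R :=
  path_weight pi H (ext s1 x).

Lemma weight_prod (w : Omega S H K) :
  weight s1 P alg w = \prod_(k < K) episode_weight (polk s1 alg w k) (w k).
Proof.
by apply: eq_bigr => k _; rewrite /episode_weight path_weight_states1 stateAt_ext /= ext_ord.
Qed.

Lemma weight_ge0 (w : Omega S H K) : 0 <= weight s1 P alg w.
Proof. by rewrite weight_prod prodr_ge0 // => k _; rewrite /episode_weight path_weight_ge0. Qed.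

Lemma weight_sum1 : \sum_(w : Omega S H K) weight s1 P alg w = 1.
Proof.
under eq_bigr => w _ do rewrite weight_prod prod_polk.
apply: (@sum_prod_eq1 _ _ path_s1 _ (fun k => @episode_prefix_dep k episode_weight)) => k G.
by rewrite sum_episode_upd path_weight_sum1.
Qed.

Definition gap_ratio (pi : policy S A) (x : {ffun 'I_H -> S}) : R :=
  traj_gap (mktraj pi (states1 (ext s1 x))) / Ymax.

Lemma gap_ratio_in01 pi x : 0 <= gap_ratio pi x <= 1.
Proof. by rewrite /gap_ratio; apply: ratio_in01; exact: traj_gap_bnd. Qed.

Definition gap_dev (w : Omega S H K) : R :=
  \sum_(k < K) (mean_gap (polk s1 alg w k) / Ymax / 2 - gap_ratio (polk s1 alg w k) (w k)).

Definition episode_mgf (pi : policy S A) (x : {ffun 'I_H -> S}) : R :=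
  episode_weight pi x * expR (mean_gap pi / Ymax / 2 - gap_ratio pi x).

Lemma episode_mgf_le1 pi : \sum_(x : {ffun 'I_H -> S}) episode_mgf pi x <= 1.
Proof.
rewrite /episode_mgf; have -> : mean_gap pi / Ymax = \sum_x episode_weight pi x * gap_ratio pi x.
  by rewrite /mean_gap /pathE mulr_suml; apply: eq_bigr => x _; rewrite mulrA.
apply: sum_expR_half_mean_le1 => [x||x]; first by rewrite /episode_weight path_weight_ge0.
  exact: path_weight_sum1.
exact: gap_ratio_in01.
Qed.

Lemma weight_expR_gap_dev (w : Omega S H K) :
  weight s1 P alg w * expR (gap_dev w) = \prod_(k < K) episode_mgf (polk s1 alg w k) (w k).
Proof. by rewrite weight_prod /gap_dev expR_sum -big_split. Qed.

(* Supermartingale argument: peel off the episodes from the last one, each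
   factor having conditional expectation at most [1] by [episode_mgf_le1]. *)
Lemma sum_weight_expR_gap_dev_le1 :
  \sum_(w : Omega S H K) weight s1 P alg w * expR (gap_dev w) <= 1.
Proof.
under eq_bigr => w _ do rewrite weight_expR_gap_dev prod_polk.
apply: (@sum_prod_le1 _ _ path_s1 _ (fun k => @episode_prefix_dep k episode_mgf)) => k G.
  by rewrite mulr_ge0 ?path_weight_ge0 ?expR_ge0.
by rewrite sum_episode_upd episode_mgf_le1.
Qed.

Lemma gapsum_gap_ratio (w : Omega S H K) :
  gapsum s1 P r beta alg w = \sum_(k < K) Ymax * gap_ratio (polk s1 alg w k) (w k).
Proof.
apply: eq_bigr => k _; rewrite mulr_ratio ?traj_gap_bnd //.
by rewrite /trajk stateAt_ext ext_ord.
Qed.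

Lemma regret_le_mean_gap (w : Omega S H K) :
  regret s1 P r beta alg w <= \sum_(k < K) mean_gap (polk s1 alg w k).
Proof. by apply: ler_sum => k _; exact: Vstar_sub_Vpi_le. Qed.

Lemma regret_le_of_gap_dev delta (w : Omega S H K) : 0 < delta <= 1 -> (3 <= K)%N ->
  gap_dev w <= ln (2 / delta) ->
  regret s1 P r beta alg w <=
  log_factor R * (gapsum s1 P r beta alg w + Ymax * ln (ln K%:R / delta)).
Proof.
move=> d01 K3 dev_le.
have Ymax_ge0 : 0 <= Ymax by rewrite mulr_ge0 ?gap_ub_ge0.
set Sm := \sum_(k < K) mean_gap (polk s1 alg w k) / Ymax.
set Sz := \sum_(k < K) gap_ratio (polk s1 alg w k) (w k).
have Sz_ge0 : 0 <= Sz.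
  by apply: sumr_ge0 => k _; case/andP: (gap_ratio_in01 (polk s1 alg w k) (w k)).
have Sm_le : Sm <= log_factor R * Sz + log_factor R * ln (ln K%:R / delta).
  have := log2_delta_le K3 d01; have := ler_wpM2r Sz_ge0 (@log_factor_ge2 R).
  by move: dev_le; rewrite /gap_dev sumrB -mulr_suml -/Sm -/Sz; lra.
apply: (le_trans (regret_le_mean_gap w)).
have -> : \sum_(k < K) mean_gap (polk s1 alg w k) = Ymax * Sm.
  by rewrite mulr_sumr; apply: eq_bigr => k _; rewrite mulr_ratio ?mean_gap_bnd.
rewrite gapsum_gap_ratio -mulr_sumr -/Sz.
have -> : log_factor R * (Ymax * Sz + Ymax * ln (ln K%:R / delta)) =
          Ymax * (log_factor R * Sz + log_factor R * ln (ln K%:R / delta)) by ring.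
exact: ler_wpM2l.
Qed.

Lemma bound_whp_log_factor delta : 0 < delta <= 1 -> (3 <= K)%N ->
  bound_whp s1 H K P r beta delta alg (log_factor R).
Proof.
move=> d01 K3; have /andP[d0 _] := d01; rewrite /bound_whp /prob.
have -> : delta / 2 = (2 / delta)^-1 by rewrite invf_div.
apply: (markov_expR (X := gap_dev)) => [w||||w]; rewrite ?divr_gt0 //.
- exact: weight_ge0.
- exact: weight_sum1.
- exact: sum_weight_expR_gap_dev_le1.
rewrite ltNge; apply: contra => dev_le; apply: regret_le_of_gap_dev => //.
by rewrite -[gap_dev w]expRK ler_ln ?posrE ?expR_gt0 ?divr_gt0.
Qed.

End Episodes.
End RiskSensitiveMDP.

Unset Implicit Arguments.

Theorem lemma1 (R : realType) :
  exists c C : R, 0 < c /\ 0 < C /\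
  forall (S A : finType) (s1 : S) (a0 : A) (H K : nat)
         (P : nat -> S -> A -> S -> R) (r : nat -> S -> A -> R) (beta delta : R),
    (forall h s a s', (1 <= h <= H)%N -> 0 <= P h s a s') ->
    (forall h s a, (1 <= h <= H)%N -> \sum_(s' : S) P h s a s' = 1) ->
    (forall h s a, (1 <= h <= H)%N -> 0 <= r h s a <= 1) ->
    beta != 0 ->
    0 < delta <= 1 ->
    (3 <= K)%N ->
    bound_whp s1 H K P r beta delta (RSVI2 a0 H K r beta delta c) C /\
    bound_whp s1 H K P r beta delta (RSQ2 a0 H K r beta delta c) C.
Proof.
exists 1, (log_factor R); split; first exact: ltr01.
split; first by have := @log_factor_ge2 R; lra.
move=> S A s1 a0 H K P r beta delta P_ge0 P_sum1 r_in01 beta_neq0 d01 K3.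
by split; apply: (bound_whp_log_factor s1 a0 P_ge0 P_sum1 r_in01 beta_neq0).
Qed.
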